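(* Let $A$ be a setoid, $B$ a setoid family over $A$, and $(C,a_C)$ a $P_B$-algebra. The extensional functions $\mathsf{rest}:\mathsf{Alg}_B(\mathsf s,a_C)\Rightarrow\mathsf{RFam}$ and $F\mapsto a_C\circ(\mathsf{cmprh}\,F):\mathsf{RFam}\Rightarrow\mathsf{Alg}_B(\mathsf s,a_C)$ are inverse to each other: for every $h:\mathsf{Alg}_B(\mathsf s,a_C)$ and $F:\mathsf{RFam}$, \[ \prod_{w:W}\mathsf{rest}\,(a_C\circ(\mathsf{cmprh}\,F))\,w\approx F\,w \qquad\text{and}\qquad a_C\circ(\mathsf{cmprh}\,(\mathsf{rest}\,h))\approx h . \]
   Context: Setting: intensional Martin-Löf type theory with $\Pi$-types, record types and a universe $\mathsf U$ closed under $\Pi$ and containing intensional $\Sigma$-types, identity types, unit type, W-types and dependent W-types; propositions-as-types. For a W-type $\mathsf W(A,B)$ with constructor $\mathsf{sup}$, $\mathsf n$ and $\mathsf b$ are the node and branch functions ($\mathsf n(\mathsf{sup}\,a\,f)\equiv a$, $\mathsf b(\mathsf{sup}\,a\,f)\equiv f$). For $I:\mathsf U$, $X:I\to\mathsf U$, $Y:\prod_iX\,i\to\mathsf U$, $d:\prod_i\prod_xY\,i\,x\to I$, the dependent W-type $\mathsf{DW}_{I,X,Y,d}:I\to\mathsf U$ is the inductive family with constructor $\mathsf{dsup}\,i\,x\,f:\mathsf{DW}\,i$ for $f:\prod_{y:Y\,i\,x}\mathsf{DW}(d\,i\,x\,y)$. A setoid $X$ is a type $X_0:\mathsf U$ with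 a type-valued relation $\approx_X$ and terms witnessing reflexivity, symmetry, transitivity; $x:X$ means $x:X_0$. An extensional function $f:X\Rightarrow Y$ is $f_0:X_0\to Y_0$ with a proof of $\prod_{x,x'}x\approx x'\to f_0x\approx f_0x'$; $X\Rightarrow Y$ is a setoid with pointwise equality; composition $\circ$. A setoid family $B$ over setoid $A$ gives setoids $B\,a$ and transport extensional functions $B_\alpha:B\,a\Rightarrow B\,a'$ for $\alpha:a\approx_Aa'$, functorial up to $\approx$ and with $B_\alpha\approx B_{\alpha'}$ for any $\alpha,\alpha':a\approx a'$. Write $b\approx_\alpha b'$ for $B_\alpha b\approx b'$. $P_BX$ has underlying type $\sum_{a:A}(B\,a\Rightarrow X)$ with $(a,k)\approx(a',k'):=\sum_{\alpha:a\approx a'}k\approx k'\circ B_\alpha$; $P_Bf(a,k):=(a,f\circ k)$. A $P_B$-algebra is a setoid $C$ with extensional $a_C:P_BC\Rightarrow C$. $W$: with $A_0,B_0$ the underlying types and $\mathsf W:=\mathsf W(A_0,B_0)$, $\approx^Bw\,w':=\mathsf{DW}_{I,X,Y,d}(w,w')$ with $I:=\mathsf W\times\mathsf W$, $X(w,w'):=\mathsf n w\approx_A\mathsf n w'$, $Y(w,w')\alpha:=\sum_{b,b'}b\approx_\alpha b'$, $d(w,w')\alpha(b,b',\beta):=(\mathsf b\,w\,b,\mathsf b\,w'\,b')$. $W$ has underlying type $\sum_{w:\mathsf W}\approx^Bw\,w$ and $(w,\_)\approx_W(w',\_):=\approx^Bw\,w'$. $\mathsf n$, $\mathsf b$ induce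 extensional $\mathsf n:W\Rightarrow A$ and $\mathsf b\,w:B(\mathsf n w)\Rightarrow W$; for $\gamma:w\approx_Ww'$ let $\mathsf n^\ast\gamma:\mathsf nw\approx_A\mathsf nw'$ be extensionality of $\mathsf n$ applied to $\gamma$. $\mathsf s:P_BW\Rightarrow W$ sends $(a,f)$ to $\mathsf{sup}\,a\,f_0$; $\mathsf{us}:W\Rightarrow P_BW$ is $w\mapsto(\mathsf nw,\mathsf bw)$. $\mathsf{ImS}\,w$ (for $w:W$): setoid with underlying type $B_0(\mathsf nw)$ and $b\approx b':=\mathsf b\,w\,b\approx_W\mathsf b\,w\,b'$; transport $\mathsf{ImS}_\gamma s:=B_{\mathsf n^\ast\gamma}s$. $e_w:B(\mathsf nw)\Rightarrow\mathsf{ImS}\,w$ has identity underlying function; $m_w:\mathsf{ImS}\,w\Rightarrow W$ has the underlying function of $\mathsf b\,w$. A family $F:\prod_{s:\mathsf{ImS}w}\mathsf{ImS}(\mathsf bws)\Rightarrow C$ is coherent if $F\,s\approx(F\,s')\circ\mathsf{ImS}_\sigma$ for all $\sigma:s\approx s'$ in $\mathsf{ImS}\,w$; $\mathsf{CohMaps}\,w$ is the setoid of coherent families with pointwise equality. For $F:\mathsf{CohMaps}\,w$, $\mathsf{recst}\,w\,F:\mathsf{ImS}\,w\Rightarrow C$ is the extensional function $s\mapsto a_C(\mathsf n(\mathsf bws),(F\,s)\circ e_{\mathsf bws})$. For $k:\mathsf{ImS}\,w\Rightarrow C$, $\mathsf{RecDef}\,w\,k:=\mathsf{DW}_{I',X',Y',d'}(w,k)$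 with $I':=\sum_{w:W}(\mathsf{ImS}w\Rightarrow C)$, $X'(w,k):=\sum_{F:\mathsf{CohMaps}w}k\approx\mathsf{recst}\,w\,F$, $Y'(w,k)(F,\_):=$ underlying type of $\mathsf{ImS}\,w$, $d'(w,k)(F,\_)s:=(\mathsf bws,F\,s)$. $\mathsf{Alg}_B(\mathsf s,a_C)$: setoid with underlying type $\sum_{h:W\Rightarrow C}h\circ\mathsf s\approx a_C\circ(P_Bh)$ and equality $h\approx h'$. $\mathsf{RFam}$: setoid with underlying type $\sum_{F:\prod_{w:W}\mathsf{ImS}w\Rightarrow C}\prod_w\mathsf{RecDef}\,w\,(F\,w)$ and $(F,\_)\approx(F',\_):=\prod_wF\,w\approx F'\,w$. For $h:W\Rightarrow C$, $h|_w:=h\circ m_w$; $\mathsf{rest}$ sends an algebra morphism $h$ to the family $w\mapsto h|_w$ (each $h|_w$ is recursively defined). For $F:\mathsf{RFam}$, $\mathsf{cmprh}\,F:W\Rightarrow P_BC$ is $w\mapsto(\mathsf n\,w,(F\,w)\circ e_w)$, and $a_C\circ(\mathsf{cmprh}\,F)$ is an algebra morphism. *)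

(* Plain Rocq (no libraries needed). Setoids with Type-valued relations,
   following the paper's intensional MLTT setting; Type plays the role of U. *)

Record Setoid : Type := mkSetoid {
  car :> Type;
  eqv : car -> car -> Type;
  srefl : forall x, eqv x x;
  ssym : forall x y, eqv x y -> eqv y x;
  strans : forall x y z, eqv x y -> eqv y z -> eqv x z }.
Arguments eqv {_} x y.
Arguments srefl {_} x.
Arguments ssym {_ x y} _.
Arguments strans {_ x y z} _ _.
Notation "x ≈ y" := (eqv x y) (at level 70, no associativity).

Record ExtFun (X Y : Setoid) : Type := mkExt {
  ap :> car X -> car Y;
  ext : forall x x', x ≈ x' -> ap x ≈ ap x' }.
Arguments mkExt {X Y} ap ext.
Arguments ap {X Y} _ _.
Arguments ext {X Y} e {x x'} _.

Definition FunS (X Y : Setoid) : Setoid :=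
  {| car := ExtFun X Y;
     eqv := fun f g => forall x, f x ≈ g x;
     srefl := fun f x => srefl (f x);
     ssym := fun f g p x => ssym (p x);
     strans := fun f g h p q x => strans (p x) (q x) |}.

Definition comp {X Y Z : Setoid} (g : ExtFun Y Z) (f : ExtFun X Y) : ExtFun X Z :=
  mkExt (fun x => g (f x)) (fun x x' p => ext g (ext f p)).

Record Fam (A : Setoid) : Type := mkFam {
  fam :> car A -> Setoid;
  tr : forall a a', a ≈ a' -> ExtFun (fam a) (fam a');
  tr_irr : forall a a' (p q : a ≈ a') x, tr a a' p x ≈ tr a a' q x;
  tr_id : forall a x, tr a a (srefl a) x ≈ x;
  tr_comp : forall a a' a'' (p : a ≈ a') (q : a' ≈ a'') x,
      tr a a'' (strans p q) x ≈ tr a' a'' q (tr a a' p x) }.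
Arguments fam {A} _ _.
Arguments tr {A} f {a a'} p.
Arguments tr_irr {A} f {a a'} p q x.
Arguments tr_id {A} f a x.
Arguments tr_comp {A} f {a a' a''} p q x.

Definition tr_any_refl {A} (B : Fam A) {a : car A} (p : a ≈ a) (x : car (B a))
  : tr B p x ≈ x := strans (tr_irr B p (srefl a) x) (tr_id B a x).

Definition tr_sym_l {A} (B : Fam A) {a a' : car A} (p : a ≈ a') (y : car (B a'))
  : tr B p (tr B (ssym p) y) ≈ y :=
  strans (ssym (tr_comp B (ssym p) p y)) (tr_any_refl B (strans (ssym p) p) y).

Definition PB {A} (B : Fam A) (X : Setoid) : Setoid.
Proof.
  refine {| car := { a : car A & ExtFun (B a) X };
            eqv := fun u v => { α : projT1 u ≈ projT1 v &
                         forall z, projT2 u z ≈ projT2 v (tr B α z) } |}.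
  - intros [a k]. exists (srefl a). intro z. exact (ext k (ssym (tr_id B a z))).
  - intros [a k] [a' k'] [α H]. exists (ssym α). intro z. simpl in *.
    exact (ssym (strans (H (tr B (ssym α) z)) (ext k' (tr_sym_l B α z)))).
  - intros [a k] [a' k'] [a'' k''] [α H] [α' H']. exists (strans α α'). intro z.
    simpl in *. exact (strans (H z) (strans (H' (tr B α z))
                        (ext k'' (ssym (tr_comp B α α' z))))).
Defined.

Definition PBmap {A} (B : Fam A) {X Y : Setoid} (f : ExtFun X Y)
  : ExtFun (PB B X) (PB B Y).
Proof.
  refine (mkExt (fun u : car (PB B X) => (existT _ (projT1 u) (comp f (projT2 u)) : car (PB B Y))) _).
  intros [a k] [a' k'] [α H]. exists α. intro z. exact (ext f (H z)).
Defined.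

Definition PB_eq_pw {A} (B : Fam A) {X : Setoid} (a : car A) (k k' : ExtFun (B a) X)
  (H : forall z, k z ≈ k' z) : @eqv (PB B X) (existT _ a k) (existT _ a k').
Proof. exists (srefl a). intro z. exact (strans (H z) (ext k' (ssym (tr_id B a z)))). Defined.

Inductive Wt (A0 : Type) (B0 : A0 -> Type) : Type :=
  sup : forall a : A0, (B0 a -> Wt A0 B0) -> Wt A0 B0.
Arguments sup {A0 B0} a f.
Definition nd {A0 B0} (w : Wt A0 B0) : A0 := match w with sup a _ => a end.
Definition bd {A0 B0} (w : Wt A0 B0) : B0 (nd w) -> Wt A0 B0 :=
  match w return B0 (nd w) -> Wt A0 B0 with sup a f => f end.

Inductive DW (I : Type) (X : I -> Type) (Y : forall i, X i -> Type)
    (d : forall i x, Y i x -> I) : I -> Type :=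
  dsup : forall i (x : X i), (forall y : Y i x, DW I X Y d (d i x y)) -> DW I X Y d i.
Arguments dsup {I X Y d} i x f.
Definition xproj {I X Y d} {i : I} (g : DW I X Y d i) : X i :=
  match g with dsup _ x _ => x end.
Definition bproj {I X Y d} {i : I} (g : DW I X Y d i)
  : forall y : Y i (xproj g), DW I X Y d (d i (xproj g) y) :=
  match g as g0 in DW _ _ _ _ i0
        return forall y : Y i0 (xproj g0), DW I X Y d (d i0 (xproj g0) y)
  with dsup _ x f => f end.

Definition Wty {A} (B : Fam A) : Type := Wt (car A) (fun a => car (B a)).
Definition WI {A} (B : Fam A) : Type := (Wty B * Wty B)%type.
Definition WX {A} (B : Fam A) (p : WI B) : Type := @eqv A (nd (fst p)) (nd (snd p)).
Definition WY {A} (B : Fam A) (p : WI B) (α : WX B p) : Type :=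
  { b : car (B (nd (fst p))) & { b' : car (B (nd (snd p))) & tr B α b ≈ b' } }.
Definition Wd {A} (B : Fam A) (p : WI B) (α : WX B p) (y : WY B p α) : WI B :=
  (bd (fst p) (projT1 y), bd (snd p) (projT1 (projT2 y))).
Definition eqB {A} (B : Fam A) (w w' : Wty B) : Type :=
  DW (WI B) (WX B) (WY B) (Wd B) (w, w').

Definition eqB_sym_gen {A} (B : Fam A)
  : forall i, DW (WI B) (WX B) (WY B) (Wd B) i ->
              DW (WI B) (WX B) (WY B) (Wd B) (snd i, fst i).
Proof.
  refine (DW_rect _ _ _ _ (fun i _ => DW _ _ _ _ (snd i, fst i)) _).
  intros i α f IH.
  refine (dsup (snd i, fst i) (ssym α) _).
  intros [b [b' β]].
  refine (IH (existT _ b' (existT _ b _))).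
  exact (strans (ext (tr B α) (ssym β)) (tr_sym_l B α b)).
Defined.

Definition eqB_trans_gen {A} (B : Fam A)
  : forall i, DW (WI B) (WX B) (WY B) (Wd B) i ->
      forall w, DW (WI B) (WX B) (WY B) (Wd B) (snd i, w) ->
                DW (WI B) (WX B) (WY B) (Wd B) (fst i, w).
Proof.
  refine (DW_rect _ _ _ _ (fun i _ => forall w, DW _ _ _ _ (snd i, w) -> DW _ _ _ _ (fst i, w)) _).
  intros i α f IH w g2.
  pose (α2 := xproj g2 : WX B (snd i, w)).
  refine (dsup (fst i, w) (strans α α2) _).
  intros [b [b'' β]].
  pose (y1 := existT _ b (existT _ (tr B α b) (srefl _)) : WY B i α).
  pose (y2 := existT _ (tr B α b) (existT _ b'' (strans (ssym (tr_comp B α α2 b)) β))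
              : WY B (snd i, w) α2).
  exact (IH y1 (bd w b'') (bproj g2 y2)).
Defined.

Definition WS {A} (B : Fam A) : Setoid :=
  {| car := { w : Wty B & eqB B w w };
     eqv := fun x y => eqB B (projT1 x) (projT1 y);
     srefl := fun x => projT2 x;
     ssym := fun x y g => eqB_sym_gen B (projT1 x, projT1 y) g;
     strans := fun x y z g g' => eqB_trans_gen B (projT1 x, projT1 y) g (projT1 z) g' |}.

Definition nW {A} (B : Fam A) : ExtFun (WS B) A :=
  mkExt (fun x : car (WS B) => nd (projT1 x)) (fun x y g => xproj g).

Definition brW {A} {B : Fam A} {x y : car (WS B)} (g : x ≈ y)
  (b : car (B (nW B x))) (b' : car (B (nW B y))) (β : tr B (ext (nW B) g) b ≈ b')
  : eqB B (bd (projT1 x) b) (bd (projT1 y) b') :=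
  bproj g (existT _ b (existT _ b' β)).

Definition bW {A} {B : Fam A} (x : car (WS B)) : ExtFun (B (nW B x)) (WS B).
Proof.
  refine (mkExt (fun b0 => (existT (fun w => eqB B w w) (bd (projT1 x) b0)
                     (brW (srefl x) b0 b0 (tr_any_refl B _ b0)) : car (WS B))) _).
  intros b0 b1 H. exact (brW (srefl x) b0 b1 (strans (tr_any_refl B _ b0) H)).
Defined.

Definition sW {A} (B : Fam A) : ExtFun (PB B (WS B)) (WS B).
Proof.
  simple refine (mkExt (fun u : car (PB B (WS B)) =>
     (existT (fun w => eqB B w w) (sup (projT1 u) (fun z => projT1 (projT2 u z))) _ : car (WS B))) _).
  - destruct u as [a f]. simpl.
    refine (dsup (sup a (fun z => projT1 (f z)), sup a (fun z => projT1 (f z))) (srefl a) _).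
    intros [b [b' β]].
    exact (ext f (strans (ssym (tr_id B a b)) β)).
  - intros [a f] [a' f'] [α H]. simpl in *.
    refine (dsup (sup a (fun z => projT1 (f z)), sup a' (fun z => projT1 (f' z))) α _).
    intros [b [b' β]].
    exact (@strans (WS B) _ _ _ (H b) (ext f' β)).
Defined.

Definition usW {A} (B : Fam A) (x : car (WS B)) : car (PB B (WS B)) :=
  existT _ (nW B x) (bW x).

Definition ImS {A} {B : Fam A} (x : car (WS B)) : Setoid :=
  {| car := car (B (nW B x));
     eqv := fun s s' => bW x s ≈ bW x s';
     srefl := fun s => srefl (bW x s);
     ssym := fun s s' p => ssym p;
     strans := fun s s' s'' p q => strans p q |}.

Definition ImS_tr {A} {B : Fam A} {x y : car (WS B)} (g : x ≈ y) : ExtFun (ImS x) (ImS y).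
Proof.
  refine (mkExt (fun s : car (ImS x) => tr B (ext (nW B) g) s : car (ImS y)) _).
  intros s s' σ.
  pose (e1 := brW g s (tr B (ext (nW B) g) s) (srefl _) : bW x s ≈ bW y (tr B (ext (nW B) g) s)).
  pose (e2 := brW g s' (tr B (ext (nW B) g) s') (srefl _) : bW x s' ≈ bW y (tr B (ext (nW B) g) s')).
  exact (strans (ssym e1) (strans (σ : bW x s ≈ bW x s') e2)).
Defined.

Definition eW {A} {B : Fam A} (x : car (WS B)) : ExtFun (B (nW B x)) (ImS x) :=
  mkExt (fun z : car (B (nW B x)) => z : car (ImS x)) (fun z z' p => ext (bW x) p).
Definition mW {A} {B : Fam A} (x : car (WS B)) : ExtFun (ImS x) (WS B) :=
  mkExt (fun z : car (ImS x) => bW x z) (fun z z' p => p).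

Definition CohMaps {A} {B : Fam A} (C : Setoid) (x : car (WS B)) : Setoid.
Proof.
  refine {| car := { F : forall s : car (ImS x), ExtFun (ImS (bW x s)) C &
                     forall (s s' : car (ImS x)) (σ : s ≈ s'),
                       @eqv (FunS (ImS (bW x s)) C) (F s) (comp (F s') (ImS_tr σ)) };
            eqv := fun F F' => forall s, @eqv (FunS (ImS (bW x s)) C) (projT1 F s) (projT1 F' s) |}.
  - intros F s. exact (srefl _).
  - intros F F' p s. exact (ssym (p s)).
  - intros F F' F'' p q s. exact (strans (p s) (q s)).
Defined.

Definition recst {A} {B : Fam A} {C : Setoid} (aC : ExtFun (PB B C) C)
  (x : car (WS B)) (F : car (CohMaps C x)) : ExtFun (ImS x) C.
Proof.
  refine (mkExt (fun s : car (ImS x) => aC (existT _ (nW B (bW x s)) (comp (projT1 F s) (eW (bW x s))))) _).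
  intros s s' σ. apply (ext aC).
  exists (ext (nW B) (σ : bW x s ≈ bW x s')). intro z. exact (projT2 F s s' σ z).
Defined.

Definition RI {A} (B : Fam A) (C : Setoid) : Type :=
  { x : car (WS B) & ExtFun (ImS x) C }.
Definition RX {A} {B : Fam A} {C : Setoid} (aC : ExtFun (PB B C) C) (i : RI B C) : Type :=
  { F : car (CohMaps C (projT1 i)) &
        @eqv (FunS (ImS (projT1 i)) C) (projT2 i) (recst aC (projT1 i) F) }.
Definition RY {A} {B : Fam A} {C : Setoid} (aC : ExtFun (PB B C) C) (i : RI B C)
  (p : RX aC i) : Type := car (ImS (projT1 i)).
Definition Rd {A} {B : Fam A} {C : Setoid} (aC : ExtFun (PB B C) C) (i : RI B C)
  (p : RX aC i) (s : RY aC i p) : RI B C :=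
  existT _ (bW (projT1 i) s) (projT1 (projT1 p) s).

Definition RecDef {A} {B : Fam A} {C : Setoid} (aC : ExtFun (PB B C) C)
  (x : car (WS B)) (k : ExtFun (ImS x) C) : Type :=
  DW (RI B C) (RX aC) (RY aC) (Rd aC) (existT _ x k).

Definition AlgS {A} {B : Fam A} {C : Setoid} (aC : ExtFun (PB B C) C) : Setoid.
Proof.
  refine {| car := { h : ExtFun (WS B) C &
                     @eqv (FunS (PB B (WS B)) C) (comp h (sW B)) (comp aC (PBmap B h)) };
            eqv := fun h h' => @eqv (FunS (WS B) C) (projT1 h) (projT1 h') |}.
  - intros h. exact (srefl _).
  - intros h h' p. exact (ssym p).
  - intros h h' h'' p q. exact (strans p q).
Defined.

Definition RFamS {A} {B : Fam A} {C : Setoid} (aC : ExtFun (PB B C) C) : Setoid.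
Proof.
  refine {| car := { F : forall x : car (WS B), ExtFun (ImS x) C &
                     forall x, RecDef aC x (F x) };
            eqv := fun F F' => forall x, @eqv (FunS (ImS x) C) (projT1 F x) (projT1 F' x) |}.
  - intros F x. exact (srefl _).
  - intros F F' p x. exact (ssym (p x)).
  - intros F F' F'' p q x. exact (strans (p x) (q x)).
Defined.

Definition eta_s {A} (B : Fam A) (x : car (WS B)) : x ≈ sW B (usW B x).
Proof. destruct x as [[a f] r]. exact r. Defined.

Definition restRD {A} {B : Fam A} {C : Setoid} (aC : ExtFun (PB B C) C)
  (h : car (AlgS aC)) : forall x : car (WS B), RecDef aC x (comp (projT1 h) (mW x)).
Proof.
  intros [t r]. revert r. induction t as [a f IH]. intro r.
  set (x := existT (fun w => eqB B w w) (sup a f) r : car (WS B)).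
  unfold RecDef.
  simple refine (dsup (existT _ x (comp (projT1 h) (mW x)))
     (existT _ (existT _ (fun s => comp (projT1 h) (mW (bW x s))) _ : car (CohMaps C x)) _
       : RX aC (existT _ x (comp (projT1 h) (mW x)))) _).
  - intros s s' σ z. simpl.
    apply (ext (projT1 h)).
    exact (brW σ z (tr B (ext (nW B) σ) z) (srefl _)).
  - intro s. simpl.
    refine (strans (ext (projT1 h) (eta_s B (bW x s))) _).
    refine (strans (projT2 h (usW B (bW x s))) _).
    apply (ext aC). apply PB_eq_pw. intro z. exact (srefl _).
  - intro s. exact (IH s _).
Defined.

Definition rest {A} {B : Fam A} {C : Setoid} (aC : ExtFun (PB B C) C)
  : ExtFun (AlgS aC) (RFamS aC).
Proof.
  refine (mkExt (fun h : car (AlgS aC) =>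
     (existT _ (fun x => comp (projT1 h) (mW x)) (restRD aC h) : car (RFamS aC))) _).
  intros h h' p x z. exact (p _).
Defined.

Definition RecDef_tr {A} {B : Fam A} {C : Setoid} (aC : ExtFun (PB B C) C)
  : forall (i : RI B C), DW (RI B C) (RX aC) (RY aC) (Rd aC) i ->
    forall (x' : car (WS B)) (k' : ExtFun (ImS x') C) (γ : projT1 i ≈ x'),
      RecDef aC x' k' -> forall z, @ap _ C (projT2 i) z ≈ k' (ImS_tr γ z).
Proof.
  refine (DW_rect _ _ _ _ (fun i _ => forall x' k' γ, RecDef aC x' k' ->
                                  forall z, @ap _ C (projT2 i) z ≈ k' (ImS_tr γ z)) _).
  intros i [G HG] f IH x' k' γ R' z.
  destruct i as [x k]. simpl in *.
  pose (p' := xproj R'). pose (G' := projT1 (projT1 p')). pose (HG' := projT2 p').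
  refine (strans (HG z) _).
  refine (strans _ (ssym (HG' (ImS_tr γ z)))).
  simpl. apply (ext aC).
  pose (σ := brW γ z (tr B (ext (nW B) γ) z) (srefl _)
             : bW x z ≈ bW x' (tr B (ext (nW B) γ) z)).
  exists (ext (nW B) σ). intro w.
  exact (IH z (bW x' (ImS_tr γ z)) (G' (ImS_tr γ z)) σ (bproj R' (ImS_tr γ z)) w).
Defined.

Definition cmprh {A} {B : Fam A} {C : Setoid} (aC : ExtFun (PB B C) C)
  (F : car (RFamS aC)) : ExtFun (WS B) (PB B C).
Proof.
  refine (mkExt (fun x : car (WS B) =>
     (existT _ (nW B x) (comp (projT1 F x) (eW x)) : car (PB B C))) _).
  intros x x' γ. exists (ext (nW B) γ). intro z.
  exact (RecDef_tr aC (existT _ x (projT1 F x)) (projT2 F x) x' (projT1 F x') γ (projT2 F x') z).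
Defined.

Definition alg_cmprh {A} {B : Fam A} {C : Setoid} (aC : ExtFun (PB B C) C)
  (F : car (RFamS aC))
  : @eqv (FunS (PB B (WS B)) C) (comp (comp aC (cmprh aC F)) (sW B))
                                  (comp aC (PBmap B (comp aC (cmprh aC F)))).
Proof.
  intros [a f]. simpl. apply (ext aC).
  refine (@strans (PB B C) _ (existT _ a (comp (comp aC (cmprh aC F)) f)) _ _ _).
  2:{ exact (srefl _). }
  apply PB_eq_pw. intro z.
  pose (u := sW B (existT _ a f)).
  pose (R := projT2 F u).
  pose (p := xproj R).
  refine (strans (projT2 p z) _).
  simpl. apply (ext aC).
  pose (γ := projT2 (f z) : bW u z ≈ f z).
  exists (ext (nW B) γ). intro w.
  exact (RecDef_tr aC _ (bproj R z) (f z) (projT1 F (f z)) γ (projT2 F (f z)) w).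
Defined.

Definition algcmprh {A} {B : Fam A} {C : Setoid} (aC : ExtFun (PB B C) C)
  : ExtFun (RFamS aC) (AlgS aC).
Proof.
  refine (mkExt (fun F : car (RFamS aC) =>
     (existT _ (comp aC (cmprh aC F)) (alg_cmprh aC F) : car (AlgS aC))) _).
  intros F F' p x. simpl. apply (ext aC). apply PB_eq_pw. intro z. exact (p x z).
Defined.


(* Every recursively defined k : ImS w => C satisfies
   k s ≈ a_C (n (b w s), k_s ∘ e) for some recursively defined k_s, and two
   recursively defined maps on the same ImS w agree (by induction on the
   RecDef witness), so k_s may be replaced by F (b w s).  An algebra morphism
   h satisfies the same equation because w ≈ s (us w). *)

Section Recursion.

Variables (A : Setoid) (B : Fam A) (C : Setoid) (aC : ExtFun (PB B C) C).

Lemma RecDef_unique (x : car (WS B)) (k k' : ExtFun (ImS x) C) :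
  RecDef aC x k -> RecDef aC x k' -> @eqv (FunS (ImS x) C) k k'.
Proof.
  intros R R' z.
  refine (strans (RecDef_tr aC (existT _ x k) R x k' (srefl x) R' z) _).
  exact (ext k' (ext (bW x) (tr_any_refl B _ z))).
Qed.

Lemma RFam_unfold (F : car (RFamS aC)) (w : car (WS B)) (s : car (ImS w)) :
  projT1 F w s ≈ aC (cmprh aC F (bW w s)).
Proof.
  pose (R := projT2 F w).
  pose (coh := xproj R).
  refine (strans (projT2 coh s) _).
  apply (ext aC), PB_eq_pw. intro z.
  exact (RecDef_unique (bW w s) _ _ (bproj R s) (projT2 F (bW w s)) z).
Qed.

Lemma AlgS_unfold (h : car (AlgS aC)) (x : car (WS B)) :
  projT1 h x ≈ aC (existT _ (nW B x) (comp (projT1 h) (bW x))).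
Proof.
  refine (strans (ext (projT1 h) (eta_s B x)) _).
  refine (strans (projT2 h (usW B x)) _).
  apply (ext aC), PB_eq_pw. intro z. exact (srefl _).
Qed.

End Recursion.

Theorem theorem3p17 :
  forall (A : Setoid) (B : Fam A) (C : Setoid) (aC : ExtFun (PB B C) C)
         (h : car (AlgS aC)) (F : car (RFamS aC)),
    (forall w : car (WS B),
        @eqv (FunS (ImS w) C) (projT1 (rest aC (algcmprh aC F)) w) (projT1 F w))
    * (@eqv (AlgS aC) (algcmprh aC (rest aC h)) h).
Proof.
  intros A B C aC h F. split.
  - intros w s. exact (ssym (RFam_unfold A B C aC F w s)).
  - intro x. exact (ssym (AlgS_unfold A B C aC h x)).
Qed.
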